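(* Let $p$ be a prime and let $f(x,y)=\lambda xy+g(x)+h(y)$ with $\lambda\in\mathbb{Z}_p\setminus\{0\}$ and $g,h:\mathbb{Z}_p\to\mathbb{Z}_p$. Let $P$ be any box with inputs and outputs in $\mathbb{Z}_p$, and for $j\in\mathbb{Z}_p$ define $$\nu_j=\frac1{p^2}\sum_{x,y=0}^{p-1}\sum_{k=0}^{p-1}P(a=k,\,b=k-f(x,y)+j\mid x,y).$$ Then $$P\to\sum_{j=0}^{p-1}\nu_jP^f_j\quad\text{and}\quad P\to\sum_{j=0}^{p-1}\nu_j\,PR_{p,\lambda^{-1}j}.$$
   Context: Let $p$ be a prime. All arithmetic on elements of $\mathbb{Z}_p$ is modulo $p$, and $\lambda^{-1}$ is the inverse of $\lambda$ in $\mathbb{Z}_p$. A box is a conditional probability distribution $P(a,b\mid x,y)$ with $a,b,x,y\in\mathbb{Z}_p$. It is shared by Alice, who supplies $x$ and receives $a$, and Bob, who supplies $y$ and receives $b$. Different copies act independently. A convex combination of boxes is the corresponding convex combination of conditional distributions. For $j\in\mathbb{Z}_p$: - $PR_{p,j}(a,b\mid x,y)=1/p$ if $a-b=xy-j$, and $0$ otherwise. - $P^f_j(a,b\mid x,y)=1/p$ if $a-b=f(x,y)-j$, and $0$ otherwise. $P_1\to P_2$ means the following. For some $N\ge1$, Alice and Bob, using shared randomness, $N$ copies of $P_1$, and local processing but no communication, can exactly produce outputs distributed as $P_2(a,b\mid x,y)$ for every input pair $(x,y)$. *)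

From HB Require Import structures.
From mathcomp Require Import all_boot all_order all_algebra.
Set Implicit Arguments. Unset Strict Implicit. Unset Printing Implicit Defensive.
Import Order.TTheory GRing.Theory Num.Theory.
Local Open Scope ring_scope.

(* A box P(a,b|x,y) with a,b,x,y in Z_p (= 'F_p, p prime), valued in an
   ordered field R; argument order: P a b x y. *)
Definition box (R : realFieldType) (p : nat) := 'F_p -> 'F_p -> 'F_p -> 'F_p -> R.

Definition is_box (R : realFieldType) (p : nat) (P : box R p) : Prop :=
  forall x y : 'F_p,
    (forall a b : 'F_p, 0 <= P a b x y) /\
    \sum_(a : 'F_p) \sum_(b : 'F_p) P a b x y = 1.

Definition PR (R : realFieldType) (p : nat) (j : 'F_p) : box R p :=
  fun a b x y => if a - b == x * y - j then (p%:R)^-1 else 0.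

Definition Pf (R : realFieldType) (p : nat) (f : 'F_p -> 'F_p -> 'F_p) (j : 'F_p)
  : box R p :=
  fun a b x y => if a - b == f x y - j then (p%:R)^-1 else 0.

Definition mix (R : realFieldType) (p : nat) (w : 'F_p -> R) (B : 'F_p -> box R p)
  : box R p :=
  fun a b x y => \sum_(j : 'F_p) w j * B j a b x y.

Definition copies (R : realFieldType) (p N : nat) (P : box R p)
  (as_ bs xs ys : {ffun 'I_N -> 'F_p}) : R :=
  \prod_(i < N) P (as_ i) (bs i) (xs i) (ys i).

(* Box produced by a local protocol: shared randomness l : 'I_n with
   weights mu; Alice feeds inputs ina l x into the N copies and outputs
   outa l x (outputs of her N copies); similarly for Bob.  Local randomness
   is absorbed into the (finite) shared randomness. *)
Definition protocol_box (R : realFieldType) (p N n : nat) (P : box R p)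
  (mu : 'I_n -> R)
  (ina : 'I_n -> 'F_p -> {ffun 'I_N -> 'F_p})
  (inb : 'I_n -> 'F_p -> {ffun 'I_N -> 'F_p})
  (outa : 'I_n -> 'F_p -> {ffun 'I_N -> 'F_p} -> 'F_p)
  (outb : 'I_n -> 'F_p -> {ffun 'I_N -> 'F_p} -> 'F_p) : box R p :=
  fun a b x y =>
    \sum_(l < n) mu l *
      \sum_(as_ : {ffun 'I_N -> 'F_p}) \sum_(bs : {ffun 'I_N -> 'F_p})
        (if (outa l x as_ == a) && (outb l y bs == b)
         then copies P as_ bs (ina l x) (inb l y) else 0).

Definition converts (R : realFieldType) (p : nat) (P1 P2 : box R p) : Prop :=
  exists (N n : nat) (mu : 'I_n -> R)
    (ina inb : 'I_n -> 'F_p -> {ffun 'I_N -> 'F_p})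
    (outa outb : 'I_n -> 'F_p -> {ffun 'I_N -> 'F_p} -> 'F_p),
    [/\ (0 < N)%N,
        (forall l, 0 <= mu l),
        \sum_(l < n) mu l = 1 &
        forall a b x y : 'F_p,
          protocol_box P1 mu ina inb outa outb a b x y = P2 a b x y].

Notation "P1 '-->' P2" := (converts P1 P2) (at level 70).

(* The conversion uses a single copy of P
   and shared uniform randomness (u, v, s) in F_p^3: Alice feeds x + u, Bob
   feeds y + v, and each adds to his/her output a locally computable
   correction plus the common s, then scales by c.  The corrections are
   chosen (shift_difference) so that the output difference is
   c (a - b + F(x,y) - f(x+u, y+v)) for a target F = lam x y + G x + H y;
   averaging over (u, v, s) makes the result depend on (a, b, x, y) only
   through F(x,y) - c^-1 (a - b), with weight nu (twirled_box_eq). *)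

From HB Require Import structures.
From mathcomp Require Import all_boot all_order all_algebra.
From mathcomp Require Import ring.
Set Implicit Arguments. Unset Strict Implicit. Unset Printing Implicit Defensive.
Import Order.TTheory GRing.Theory Num.Theory.
Local Open Scope ring_scope.

Lemma sum_indicator (R : nmodType) (T : finType) (e : T) (F : T -> R) :
  \sum_(i : T) (if i == e then F i else 0) = F e.
Proof. by rewrite -big_mkcond big_pred1_eq. Qed.

Lemma sum2_indicator (R : nmodType) (T : finType) (e1 e2 : T) (F : T -> T -> R) :
  \sum_(i : T) \sum_(j : T) (if (i == e1) && (j == e2) then F i j else 0)
  = F e1 e2.
Proof.
rewrite (bigD1 e1) //= [X in _ + X]big1 ?addr0.
  by under eq_bigr do rewrite eqxx andTb; rewrite sum_indicator.
by move=> i /negbTE ->; rewrite big1.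
Qed.

Lemma sum_ffun_ord1 (R : nmodType) (T : finType) (F : {ffun 'I_1 -> T} -> R) :
  \sum_(t : {ffun 'I_1 -> T}) F t = \sum_(a : T) F [ffun=> a].
Proof.
rewrite (reindex (fun a : T => [ffun=> a])) //.
exists (fun t : {ffun 'I_1 -> T} => t ord0) => [a _|t _]; first by rewrite ffunE.
by apply/ffunP => i; rewrite ffunE (ord1 i).
Qed.

Section UniformOneCopyProtocol.
Variables (R : realFieldType) (p : nat) (T : finType).
Hypothesis T_inhabited : (0 < #|T|)%N.
Variables (ina inb : T -> 'F_p -> 'F_p) (outa outb : T -> 'F_p -> 'F_p -> 'F_p).

Definition one_copy_box (P : box R p) : box R p := fun a b x y =>
  (#|T|%:R)^-1 * \sum_(t : T) \sum_(a' : 'F_p) \sum_(b' : 'F_p)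
    (if (outa t x a' == a) && (outb t y b' == b)
     then P a' b' (ina t x) (inb t y) else 0).

(* Such a protocol is an instance of the general definition of conversion:
   index the randomness by 'I_#|T| and use tuples of length one. *)
Lemma converts_one_copy_box (P : box R p) : P --> one_copy_box P.
Proof.
pose tup (a : 'F_p) : {ffun 'I_1 -> 'F_p} := [ffun=> a].
exists 1%N, #|T|, (fun _ => (#|T|%:R)^-1),
  (fun l x => tup (ina (enum_val l) x)), (fun l y => tup (inb (enum_val l) y)),
  (fun l x as_ => outa (enum_val l) x (as_ ord0)),
  (fun l y bs => outb (enum_val l) y (bs ord0)).
have T_neq0 : (#|T|%:R : R) != 0 by rewrite pnatr_eq0 -lt0n.
split => //.
- by move=> _; rewrite invr_ge0 ler0n.
- by rewrite sumr_const card_ord -[_ *+ _]mulr_natr mulVf.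
move=> a b x y; rewrite /protocol_box /one_copy_box -mulr_sumr; congr (_ * _).
rewrite [RHS](big_enum_val (A := T)); apply: eq_bigr => l _.
rewrite sum_ffun_ord1; apply: eq_bigr => a' _.
rewrite sum_ffun_ord1; apply: eq_bigr => b' _.
by rewrite /copies big_ord1 !ffunE.
Qed.

End UniformOneCopyProtocol.

Lemma affine_eq (K : fieldType) (c d a' a : K) : c != 0 ->
  (c * (a' + d) == a) = (a' == c^-1 * a - d).
Proof.
move=> c_neq0; apply/eqP/eqP => [<-|->].
  by rewrite mulrA mulVf // mul1r addrK.
by rewrite subrK mulrA divff // mul1r.
Qed.

Lemma sum_affine_outputs (K : finFieldType) (R : nmodType) (c d1 d2 a b : K)
    (Q : K -> K -> R) : c != 0 ->
  \sum_(a' : K) \sum_(b' : K)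
    (if (c * (a' + d1) == a) && (c * (b' + d2) == b) then Q a' b' else 0)
  = Q (c^-1 * a - d1) (c^-1 * b - d2).
Proof.
move=> c_neq0.
under eq_bigr => a' _ do under eq_bigr => b' _ do rewrite !affine_eq //.
exact: sum2_indicator.
Qed.

Lemma sum_triple (R : nmodType) (A B C : finType) (F : A * B * C -> R) :
  \sum_(t : A * B * C) F t = \sum_(a : A) \sum_(b : B) \sum_(c : C) F (a, b, c).
Proof.
rewrite (pair_bigA _ (fun a b => \sum_c F (a, b, c))) pair_bigA /=.
by apply: eq_bigr => -[[]].
Qed.

Section Twirling.
Variables (R : realFieldType) (p : nat) (lam : 'F_p) (g h : 'F_p -> 'F_p).
Variable (P : box R p).

Definition quadratic_fun (G H : 'F_p -> 'F_p) (x y : 'F_p) : 'F_p :=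
  lam * x * y + G x + H y.

Local Notation f := (quadratic_fun g h).

(* nu_j: the probability, under uniform inputs, that a - b = f(x,y) - j. *)
Definition twirl_weight (j : 'F_p) : R :=
  ((p ^ 2)%N%:R)^-1 *
    \sum_(x : 'F_p) \sum_(y : 'F_p) \sum_(k : 'F_p) P k (k - f x y + j) x y.

Variables (c : 'F_p) (G H : 'F_p -> 'F_p).

(* Alice's and Bob's output corrections when their inputs are shifted by the
   shared random (u, v); their difference turns f(x+u, y+v) into
   quadratic_fun G H x y, because the cross terms of lam (x+u)(y+v) split
   into a part known to Alice and a part known to Bob. *)
Definition alice_shift (x u v : 'F_p) : 'F_p :=
  - (lam * x * v) - lam * u * v - g (x + u) + G x.
Definition bob_shift (y u v : 'F_p) : 'F_p := lam * u * y + h (y + v) - H y.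

Lemma shift_difference (x y u v : 'F_p) :
  alice_shift x u v - bob_shift y u v = quadratic_fun G H x y - f (x + u) (y + v).
Proof. by rewrite /alice_shift /bob_shift /quadratic_fun; ring. Qed.

Let Rand := ('F_p * 'F_p * 'F_p)%type.
Definition twirl_ina (t : Rand) (x : 'F_p) : 'F_p := x + t.1.1.
Definition twirl_inb (t : Rand) (y : 'F_p) : 'F_p := y + t.1.2.
Definition twirl_outa (t : Rand) (x a' : 'F_p) : 'F_p :=
  c * (a' + (alice_shift x t.1.1 t.1.2 + t.2)).
Definition twirl_outb (t : Rand) (y b' : 'F_p) : 'F_p :=
  c * (b' + (bob_shift y t.1.1 t.1.2 + t.2)).

Hypotheses (p_prime : prime p) (c_neq0 : c != 0).

Lemma twirled_box_eq (a b x y : 'F_p) :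
  one_copy_box twirl_ina twirl_inb twirl_outa twirl_outb P a b x y
  = (p%:R)^-1 * twirl_weight (quadratic_fun G H x y - c^-1 * (a - b)).
Proof.
have card_Rand : #|{: Rand}| = (p ^ 2 * p)%N.
  by rewrite !card_prod card_Fp // -expnSr mulnA.
rewrite /one_copy_box /twirl_weight card_Rand natrM invfM -mulrA [RHS]mulrCA.
do 2 congr (_ * _).
under eq_bigr do rewrite sum_affine_outputs //; rewrite sum_triple.
rewrite [RHS](reindex_inj (addrI x)); apply: eq_bigr => u _.
rewrite [RHS](reindex_inj (addrI y)); apply: eq_bigr => v _.
rewrite [RHS](reindex_inj (inv_inj (subKr (c^-1 * a - alice_shift x u v)))).
apply: eq_bigr => s _; congr P; rewrite /twirl_ina /twirl_inb //=; first ring.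
rewrite -[quadratic_fun G H x y](subrK (f (x + u) (y + v))) -shift_difference.
ring.
Qed.

Lemma converts_twirled (Q : box R p) :
  (forall a b x y : 'F_p,
     Q a b x y = (p%:R)^-1 * twirl_weight (quadratic_fun G H x y - c^-1 * (a - b))) ->
  P --> Q.
Proof.
move=> Q_eq.
have Rand_inhabited : (0 < #|{: Rand}|)%N by apply/card_gt0P; exists (0, 0, 0).
have [N [n [mu [ina [inb [outa [outb [N_gt0 mu_ge0 mu_sum1 box_eq]]]]]]]] :=
  converts_one_copy_box Rand_inhabited twirl_ina twirl_inb twirl_outa twirl_outb P.
exists N, n, mu, ina, inb, outa, outb; split => // a b x y.
by rewrite box_eq twirled_box_eq Q_eq.
Qed.

End Twirling.

Lemma mix_indicator (R : realFieldType) (p : nat) (w : 'F_p -> R)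
    (B : 'F_p -> box R p) (e : 'F_p -> 'F_p -> 'F_p -> 'F_p -> 'F_p) :
  (forall j a b x y, B j a b x y = if j == e a b x y then (p%:R)^-1 else 0) ->
  forall a b x y, mix w B a b x y = (p%:R)^-1 * w (e a b x y).
Proof.
move=> B_eq a b x y; rewrite /mix mulrC.
rewrite -(sum_indicator (e a b x y) (fun j => w j * (p%:R)^-1)).
by apply: eq_bigr => j _; rewrite B_eq; case: eqP => [->|]; rewrite ?mulr0.
Qed.

Lemma eq_solve_index (K : fieldType) (c d F j : K) : c != 0 ->
  (d == F - c * j) = (j == c^-1 * (F - d)).
Proof.
move=> c_neq0; apply/eqP/eqP => [->|->]; first by rewrite subKr mulKf.
by rewrite mulrA divff // mul1r subKr.
Qed.

Theorem mainTheorem9 (R : realFieldType) (p : nat) (hp : prime p)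
  (lam : 'F_p) (hlam : lam != 0) (g h : 'F_p -> 'F_p) (P : box R p)
  (hP : is_box P) :
  let f := fun x y : 'F_p => lam * x * y + g x + h y in
  let nu := fun j : 'F_p =>
    ((p ^ 2)%N%:R)^-1 *
      \sum_(x : 'F_p) \sum_(y : 'F_p) \sum_(k : 'F_p) P k (k - f x y + j) x y in
  (P --> mix nu (fun j => Pf R f j)) /\
  (P --> mix nu (fun j => PR R (lam^-1 * j))).
Proof.
move=> f nu; split.
- apply: (converts_twirled (c := 1) (G := g) (H := h) hp (oner_neq0 _)).
  apply: mix_indicator => j a b x y.
  by rewrite /Pf -[j]mul1r eq_solve_index ?oner_neq0 // invr1 !mul1r.
- apply: (converts_twirled (c := lam^-1) (G := fun _ => 0) (H := fun _ => 0) hp).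
    by rewrite invr_eq0.
  apply: mix_indicator => j a b x y.
  by rewrite /PR eq_solve_index ?invr_eq0 // invrK /quadratic_fun !addr0 mulrBr mulrA.
Qed.
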